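(* Let $n\ge 1$ and $r$ be integers. A general quadratic form in $n+1$ variables has an apolar star configuration $\mathbb{X}(r)\subset\mathbb{P}^n$ if and only if $r\geq n+1$.
   Context: Let $S=\mathbb{C}[x_0,\dots,x_n]$ and $T=\mathbb{C}[y_0,\dots,y_n]$, where $T$ acts on $S$ by differentiation, $y_j=\partial/\partial x_j$. For a form $F\in S$, $F^\perp=\{\partial\in T:\partial F=0\}$. A finite set of points $\mathbb{X}\subset\mathbb{P}^n=\mathbb{P}(S_1)$ with defining ideal $I(\mathbb{X})\subseteq T$ is apolar to $F$ if $I(\mathbb{X})\subseteq F^\perp$. A star configuration $\mathbb{X}(r)\subset\mathbb{P}^n$: take $r$ linear forms $l_1,\dots,l_r\in T_1$ such that any $n+1$ of them are linearly independent; $\mathbb{X}(r)$ is the set of $\binom{r}{n}$ points obtained by intersecting the hyperplanes $\{l_i=0\}$ $n$ at a time in all possible ways (for $r<n+1$ the paper regards no star configuration as existing). ''A general form'' means any form in a suitable nonempty Zariski open subset of the space of forms of that degree. *)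

From HB Require Import structures.
From mathcomp Require Import all_boot all_order all_algebra.
From mathcomp Require Import mpoly.
From mathcomp Require Import complex.
From mathcomp Require Import reals.

Set Implicit Arguments.
Unset Strict Implicit.
Unset Printing Implicit Defensive.

Import GRing.Theory.
Local Open Scope ring_scope.

Section Apolarity.
Variable K : fieldType.

(* Action of T = K[y_0..y_k-1] on S = K[x_0..x_k-1] by differentiation,
   y_j = d/dx_j: a monomial y^m acts as the parallel derivative ^`M[m]. *)
Definition dact (k : nat) (D F : {mpoly K[k]}) : {mpoly K[k]} :=
  \sum_(m <- msupp D) D@_m *: F^`M[m].

Definition perp (k : nat) (F : {mpoly K[k]}) : pred {mpoly K[k]} :=
  fun D => dact D F == 0.

Definition quadratic_form (k : nat) (F : {mpoly K[k]}) : bool :=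
  all [pred m | mdeg m == 2%N] (msupp F).

(* Linear forms l_1..l_r in T_1 are given by their coefficient row vectors;
   l_j evaluated at v in S_1 (coordinates v) is (l_j *m v^T) 0 0.
   Star configuration condition (the paper requires r >= n+1): any n+1 of
   the l_j are linearly independent. *)
Definition star_forms (n r : nat) (l : 'I_r -> 'rV[K]_(n.+1)) : Prop :=
  (n.+1 <= r)%N /\
  forall f : 'I_(n.+1) -> 'I_r, injective f ->
    row_free (\matrix_(i < n.+1) l (f i)).

(* v (nonzero) represents a point of X(r): it lies on n of the hyperplanes
   {l_j = 0} (indexed by an n-subset J). *)
Definition star_point (n r : nat) (l : 'I_r -> 'rV[K]_(n.+1))
    (v : 'rV[K]_(n.+1)) : Prop :=
  v != 0 /\ exists J : {set 'I_r}, #|J| = n /\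
    forall j, j \in J -> (l j *m v^T) 0 0 = 0.

Definition star_ideal (n r : nat) (l : 'I_r -> 'rV[K]_(n.+1))
    (D : {mpoly K[n.+1]}) : Prop :=
  forall v, star_point l v -> D.@[fun i => v 0 i] = 0.

Definition apolar_star (n r : nat) (l : 'I_r -> 'rV[K]_(n.+1))
    (F : {mpoly K[n.+1]}) : Prop :=
  forall D, star_ideal l D -> D \in perp F.

Definition has_apolar_star (n r : nat) (F : {mpoly K[n.+1]}) : Prop :=
  exists l : 'I_r -> 'rV[K]_(n.+1), star_forms l /\ apolar_star l F.

(* Coordinates of a quadratic form on S_2: coefficient of x_i x_j
   (with repetitions; this is a linear map S_2 -> K^((n+1)^2)). *)
Definition qcoords (n : nat) (F : {mpoly K[n.+1]}) : 'I_(n.+1 * n.+1) -> K :=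
  fun k => mxvec (\matrix_(i < n.+1, j < n.+1) F@_(U_(i) + U_(j))%MM) 0 k.

(* "A general quadratic form has property P": P holds on a nonempty
   Zariski open subset of S_2, i.e. (equivalently) on a nonempty basic
   open set { F in S_2 | G(F) <> 0 } for a polynomial G in the coordinates. *)
Definition general_quadric (n : nat) (P : {mpoly K[n.+1]} -> Prop) : Prop :=
  exists G : {mpoly K[n.+1 * n.+1]},
    (exists F0, quadratic_form F0 /\ G.@[qcoords F0] != 0) /\
    forall F, quadratic_form F -> G.@[qcoords F] != 0 -> P F.

End Apolarity.

From HB Require Import structures.
From mathcomp Require Import all_boot all_order all_algebra.
From mathcomp Require Import mpoly.
From mathcomp Require Import complex.
From mathcomp Require Import reals.

(* Every quadratic form F (not only a general one) has an apolar X(r) once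
   r >= n+1; the converse is part of the definition of a star configuration.
   In characteristic 0, F is congruent to a diagonal form, F = sum_p c_p L_p^2
   with L_p = sum_i v_(p,i) x_i for a basis v_0, ..., v_n.  Take r linear forms
   whose coordinate rows are the rows of an r x (n+1) Vandermonde matrix
   multiplied by an invertible matrix chosen so that the first n+1 of them form
   the dual basis of the v_p: any n+1 of them are independent, and each [v_p]
   lies on n of their hyperplanes, hence belongs to X(r).  If D vanishes at
   the point [v], then every homogeneous component of D vanishes at v, and D
   applied to L_v^d is a combination of these values; so I(X(r)) kills each
   L_p^2, hence F. *)

Set Implicit Arguments.
Unset Strict Implicit.
Unset Printing Implicit Defensive.
Import GRing.Theory Num.Theory.
Local Open Scope ring_scope.

Section CongruenceDiagonalization.
Variable K : fieldType.

Lemma congr_mx_diagE n (P S : 'M[K]_n) i :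
  (P *m S *m P^T) i i = (row i P *m S *m (row i P)^T) 0 0.
Proof.
rewrite !mxE; apply: eq_bigr => a _; rewrite !mxE; congr (_ * _).
by apply: eq_bigr => b _; rewrite !mxE.
Qed.

Lemma delta_mx_congrE n (S : 'M[K]_n) a b :
  ((delta_mx (0 : 'I_1) a : 'rV[K]_n) *m S *m (delta_mx (0 : 'I_1) b)^T) 0 0
  = S a b.
Proof. by rewrite -rowE trmx_delta -colE !mxE. Qed.

Hypothesis two_neq0 : 2%:R != 0 :> K.

Lemma sym_mx_congr_diag_neq0 n (S : 'M[K]_n) : S^T = S -> S != 0 ->
  exists2 P, P \in unitmx & exists k, (P *m S *m P^T) k k != 0.
Proof.
move=> sS nzS.
have [k Skk|S_diag0] := pickP (fun k => S k k != 0).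
  by exists 1%:M; [exact: unitmx1 | exists k; rewrite mul1mx trmx1 mulmx1].
have {}S_diag0 k : S k k = 0 by apply/eqP/negbFE/S_diag0.
have [[i j] /= Sij] : exists ij : 'I_n * 'I_n, S ij.1 ij.2 != 0.
  apply/existsP; apply: contraNT nzS => /existsPn S0.
  by apply/eqP/matrixP => i j; rewrite mxE; apply/eqP/negbNE/(S0 (i, j)).
have ij : i != j by apply: contraNneq Sij => <-; rewrite S_diag0.
exists (1%:M + delta_mx i j).
  have inv : (1%:M + delta_mx i j) *m (1%:M - delta_mx i j) = 1%:M :> 'M[K]_n.
    rewrite mulmxDl !mulmxBr !mul1mx mulmx1 mul_delta_mx_0 1?eq_sym //.
    by rewrite subr0 subrK.
  by case: (mulmx1_unit inv).
exists i; rewrite congr_mx_diagE.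
have -> : row i (1%:M + delta_mx i j) = delta_mx 0 i + delta_mx 0 j :> 'rV[K]_n.
  by apply/rowP => a; rewrite !mxE eqxx /= eq_sym.
have entryD (A B : 'M[K]_1) : (A + B) 0 0 = A 0 0 + B 0 0 by rewrite mxE.
rewrite raddfD /= !mulmxDl !mulmxDr !entryD !delta_mx_congrE !S_diag0 add0r addr0.
have -> : S j i = S i j by rewrite -{1}sS mxE.
by rewrite -mulr2n -mulr_natl mulf_neq0.
Qed.

Lemma sym_mx_congr_lead_neq0 n (S : 'M[K]_n.+1) : S^T = S -> S != 0 ->
  exists2 P, P \in unitmx & (P *m S *m P^T) 0 0 != 0.
Proof.
move=> sS nzS; have [P1 uP1 [k nzk]] := sym_mx_congr_diag_neq0 sS nzS.
exists (tperm_mx 0 k *m P1); first by rewrite unitmx_mul unitmx_perm.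
have -> : tperm_mx 0 k *m P1 *m S *m (tperm_mx 0 k *m P1)^T =
    tperm_mx 0 k *m (P1 *m S *m P1^T) *m (tperm_mx 0 k)^T.
  by rewrite trmx_mul !mulmxA.
move: (P1 *m S *m P1^T) nzk => T.
by rewrite tr_tperm_mx -xrowE -xcolE !mxE perm.tpermL.
Qed.

Lemma sym_mx_schur_step n (S : 'M[K]_(1 + n)) : S^T = S -> S 0 0 != 0 ->
  exists2 E, E \in unitmx &
    exists2 S2 : 'M_n, S2^T = S2 & E *m S *m E^T = block_mx (S 0 0)%:M 0 0 S2.
Proof.
move=> sS nzS; set a := S 0 0; set b := ursubmx S.
pose E := block_mx 1%:M 0 (- (a^-1 *: b^T)) 1%:M.
have ET : E^T = block_mx 1%:M (- (a^-1 *: b)) 0 1%:M.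
  by rewrite tr_block_mx !trmx1 trmx0 linearN /= linearZ /= trmxK.
exists E.
  by rewrite unitmxE det_lblock !det1 mulr1 unitr1.
exists (drsubmx S - a^-1 *: (b^T *m b)).
  by rewrite linearB /= linearZ /= trmx_mul trmxK trmx_drsub sS.
have ul : ulsubmx S = a%:M.
  by apply/matrixP => i j; rewrite !ord1 !mxE; congr (S _ _); apply/val_inj.
have dl : dlsubmx S = b^T by rewrite /b trmx_ursub sS.
rewrite ET -{1}(submxK S) ul dl /E !mulmx_block.
rewrite ?mul1mx ?mul0mx ?mulmx0 ?mulmx1 ?addr0 ?add0r ?mul_mx_scalar -/b.
have h1 : a *: - (a^-1 *: b^T) + b^T = 0.
  by rewrite scalerN scalerA mulfV // scale1r addNr.
have h2 : a%:M *m - (a^-1 *: b) + b = 0.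
  by rewrite mul_scalar_mx scalerN scalerA mulfV // scale1r addNr.
by rewrite h1 h2 mul0mx add0r mulNmx -scalemxAl addrC.
Qed.

Lemma sym_mx_congr_block n (S : 'M[K]_(1 + n)) : S^T = S ->
  exists2 P, P \in unitmx & exists a,
    exists2 S2 : 'M_n, S2^T = S2 & P *m S *m P^T = block_mx a%:M 0 0 S2.
Proof.
move=> sS; have [->|nzS] := eqVneq S 0.
  exists 1%:M; first exact: unitmx1.
  by exists 0, 0; rewrite ?trmx0 // mulmx0 mul0mx raddf0 block_mx0.
have [P uP nzP] := sym_mx_congr_lead_neq0 sS nzS.
have sPS : (P *m S *m P^T)^T = P *m S *m P^T by rewrite !trmx_mul trmxK sS mulmxA.
have [E uE [S2 sS2 eE]] := sym_mx_schur_step sPS nzP.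
exists (E *m P); first by rewrite unitmx_mul uE.
by exists ((P *m S *m P^T) 0 0), S2; rewrite // -eE trmx_mul !mulmxA.
Qed.

Lemma sym_mx_congr_diag n (S : 'M[K]_n) : S^T = S ->
  exists2 W, W \in unitmx & exists c : 'rV_n, W *m S *m W^T = diag_mx c.
Proof.
elim: n S => [|n IH] S sS.
  by exists 1%:M; [exact: unitmx1 | exists 0; apply/matrixP => [[]]].
have [P uP [a [S2 sS2 eP]]] := @sym_mx_congr_block n S sS.
have [W uW [c eW]] := IH S2 sS2.
pose B : 'M_(1 + n) := block_mx 1%:M 0 0 W.
exists (B *m P).
  by rewrite unitmx_mul uP andbT unitmxE (@det_lblock _ 1) det1 mul1r -unitmxE.
exists (row_mx (const_mx a : 'rV_1) c).
have -> : B *m P *m S *m (B *m P)^T = B *m (P *m S *m P^T) *m B^T.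
  by rewrite trmx_mul !mulmxA.
rewrite eP tr_block_mx !trmx0 trmx1 !mulmx_block.
rewrite !mul1mx !mul0mx !mulmx0 !mulmx1 !addr0 !add0r eW (@diag_mx_row _ n 1).
have -> : diag_mx (const_mx a : 'rV_1) = a%:M.
  by apply/matrixP => i j; rewrite !ord1 !mxE.
by rewrite [0 *m _]mul0mx.
Qed.

End CongruenceDiagonalization.

Lemma mdeg_eqS n (m : 'X_{1..n}) d : mdeg m = d.+1 ->
  exists i m', m = (m' + U_(i))%MM /\ mdeg m' = d.
Proof.
move=> md; have [i mi] : exists i, m i != 0%N.
  apply/existsP; apply: contra_eqT md => /existsPn m0.
  suff -> : m = 0%MM by rewrite mdeg0.
  by apply/mnmP => i; rewrite mnm0E; apply/eqP/negbNE/m0.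
exists i, (m - U_(i))%MM; rewrite submK ?lep1mP //; split=> //.
apply/succn_inj; rewrite -md -{2}(submK (m := U_(i)) (m' := m)) ?lep1mP //.
by rewrite mdegD mdeg1 addn1.
Qed.

Lemma mdeg_eq2 n (m : 'X_{1..n}) :
  mdeg m = 2 -> exists a b, m = (U_(a) + U_(b))%MM.
Proof.
move=> md; have [b [m1 [-> md1]]] := mdeg_eqS md.
have [a [m2 [-> /eqP]]] := mdeg_eqS md1; rewrite mdeg_eq0 => /eqP ->.
by exists a, b; rewrite add0m.
Qed.

Section DifferentiationAction.
Variables (K : fieldType) (k : nat).

Lemma dact_sum (I : finType) (D : {mpoly K[k]}) (c : I -> K)
    (G : I -> {mpoly K[k]}) :
  dact D (\sum_l c l *: G l) = \sum_l c l *: dact D (G l).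
Proof.
rewrite /dact; under eq_bigr do rewrite linear_sum scaler_sumr.
rewrite exchange_big /=; apply: eq_bigr => l _.
rewrite scaler_sumr; apply: eq_bigr => m _.
by rewrite mderivmZ !scalerA mulrC.
Qed.

End DifferentiationAction.

Section LinearFormPowers.
Variables (K : numFieldType) (k : nat).
Implicit Types (v : 'I_k -> K) (m : 'X_{1..k}) (D : {mpoly K[k]}).

Definition linform v : {mpoly K[k]} := \sum_i v i *: 'X_i.

Lemma mderiv_linform v j : (linform v)^`M(j) = (v j)%:MP.
Proof.
rewrite /linform raddf_sum /= (bigD1 j) //= big1 ?addr0 => [|i ij].
  rewrite mderivZ mderivX mnm1E eqxx scale1r -{1}(add0m U_(j)%MM) addmK.
  by rewrite mpolyX0 -mul_mpolyC mulr1.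
by rewrite mderivZ mderivX mnm1E (negbTE ij) scale0r scaler0.
Qed.

Lemma mderiv_linform_exp v p j :
  (linform v ^+ p)^`M(j) = (p%:R * v j) *: linform v ^+ p.-1.
Proof.
elim: p => [|p IH]; first by rewrite expr0 -mpolyC1 mderivC mul0r scale0r.
rewrite exprS mderivM IH mderiv_linform mul_mpolyC -scalerAr.
case: p IH => [|p] _ /=; first by rewrite mul0r scale0r addr0 mul1r.
by rewrite -exprS -scalerDl [p.+2%:R]mulrS mulrDl mul1r.
Qed.

Lemma mderivm_linform_exp v p m :
  (linform v ^+ p)^`M[m] =
    ((p ^_ mdeg m)%:R * 'X_[m].@[v]) *: linform v ^+ (p - mdeg m).
Proof.
move: {2}(mdeg m) (erefl (mdeg m)) => d; elim: d m => [|d IH] m md.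
  move/eqP: md; rewrite mdeg_eq0 => /eqP ->.
  by rewrite mderivm0m mdeg0 ffactn0 mpolyX0 mevalC mulr1 scale1r subn0.
have [i [m' [-> md']]] := mdeg_eqS md.
rewrite mderivmDm mderivmU1m IH // mderivZ mderiv_linform_exp scalerA.
rewrite mdegD mdeg1 addn1 ffactnSr mpolyXD mevalM mevalXU natrM subnS.
by congr (_ *: _); rewrite -!mulrA; congr (_ * _); rewrite mulrCA.
Qed.

Lemma meval_scale D v t :
  D.@[fun i => t * v i] = \sum_(m <- msupp D) D@_m * 'X_[m].@[v] * t ^+ mdeg m.
Proof.
rewrite mevalE; apply: eq_bigr => m _; rewrite mevalX -mulrA; congr (_ * _).
under eq_bigr do rewrite exprMn.
by rewrite big_split /= prodrXr mdegE mulrC.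
Qed.

Lemma meval_line_homog_eq0 D v :
  (forall t, t != 0 -> D.@[fun i => t * v i] = 0) ->
  forall d, \sum_(m <- msupp D | mdeg m == d) D@_m * 'X_[m].@[v] = 0.
Proof.
move=> D_line d.
pose P : {poly K} := \sum_(m <- msupp D) (D@_m * 'X_[m].@[v]) *: 'X^(mdeg m).
have P_eval t : P.[t] = D.@[fun i => t * v i].
  rewrite meval_scale /P horner_sum; apply: eq_bigr => m _.
  by rewrite hornerZ hornerXn.
have P0 : P = 0.
  apply: (@roots_geq_poly_eq0 _ _ [seq i.+1%:R | i <- iota 0 (size P)]).
  - by apply/allP => _ /mapP [i _ ->]; rewrite /root P_eval D_line ?pnatr_eq0.
  - by rewrite map_inj_uniq ?iota_uniq // => i j /eqP; rewrite eqr_nat => /eqP [].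
  - by rewrite size_map size_iota.
transitivity P`_d; last by rewrite P0 coef0.
rewrite /P coef_sum big_mkcond; apply: eq_bigr => m _.
by rewrite coefZ coefXn eq_sym; case: eqP; rewrite ?mulr1 ?mulr0.
Qed.

Lemma dact_linform_exp D v p :
  (forall t, t != 0 -> D.@[fun i => t * v i] = 0) -> dact D (linform v ^+ p) = 0.
Proof.
move=> D_line; rewrite /dact.
have by_deg m : D@_m *: (linform v ^+ p)^`M[m] =
    \sum_(j < p.+1 | mdeg m == j)
      (p ^_ j)%:R *: ((D@_m * 'X_[m].@[v]) *: linform v ^+ (p - j)).
  rewrite mderivm_linform_exp scalerA mulrCA -scalerA.
  have [lt_p_m|le_m_p] := ltnP p (mdeg m).
    rewrite ffact_small // scale0r big1 // => j /eqP mj.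
    by move: (ltn_ord j); rewrite -mj ltnS leqNgt lt_p_m.
  by rewrite (big_pred1 (Ordinal (le_m_p : (mdeg m < p.+1)%N))).
rewrite (eq_bigr _ (fun m _ => by_deg m)) (exchange_big_dep predT) //=.
rewrite big1 // => j _; rewrite -scaler_sumr -scaler_suml.
by rewrite (meval_line_homog_eq0 D_line) scale0r scaler0.
Qed.

End LinearFormPowers.


Section QuadraticForms.
Variables (K : numFieldType) (k : nat).
Implicit Types (A : 'M[K]_k) (F : {mpoly K[k]}).

Definition qform A : {mpoly K[k]} := \sum_i \sum_j A i j *: ('X_i * 'X_j).

Lemma qformD A B : qform (A + B) = qform A + qform B.
Proof.
rewrite /qform -big_split; apply: eq_bigr => i _.
by rewrite -big_split; apply: eq_bigr => j _; rewrite mxE scalerDl.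
Qed.

Lemma qformZ a A : qform (a *: A) = a *: qform A.
Proof.
rewrite /qform scaler_sumr; apply: eq_bigr => i _.
by rewrite scaler_sumr; apply: eq_bigr => j _; rewrite mxE scalerA.
Qed.

Lemma qform_tr A : qform A^T = qform A.
Proof.
rewrite /qform exchange_big; apply: eq_bigr => i _; apply: eq_bigr => j _.
by rewrite mxE mulrC.
Qed.

Lemma qform_delta a b : qform (delta_mx a b) = 'X_a * 'X_b.
Proof.
rewrite /qform (bigD1 a) //= [X in _ + X]big1 ?addr0 => [|i ia]; last first.
  by rewrite big1 // => j _; rewrite mxE (negbTE ia) scale0r.
rewrite (bigD1 b) //= [X in _ + X]big1 ?addr0 => [|j jb]; last first.
  by rewrite mxE (negbTE jb) andbF scale0r.
by rewrite mxE !eqxx scale1r.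
Qed.

Lemma quadratic_form_qform F : quadratic_form F -> exists A, F = qform A.
Proof.
move=> /allP qF; rewrite (mpolyE F).
elim: (msupp F) qF => [|m s IH] qF.
  by exists 0; rewrite big_nil -(scale0r (0 : 'M[K]_k)) qformZ scale0r.
have [A eA] := IH (fun x xs => qF x (mem_behead (s := m :: s) xs)).
have [a [b eab]] := mdeg_eq2 (eqP (qF m (mem_head _ _))).
exists (F@_m *: delta_mx a b + A).
by rewrite big_cons eA qformD qformZ qform_delta eab mpolyXD.
Qed.

Lemma quadratic_form_qform_sym F : quadratic_form F ->
  exists2 S, S^T = S & F = qform S.
Proof.
move=> /quadratic_form_qform [A ->].
exists (2%:R^-1 *: (A + A^T)); first by rewrite linearZ /= linearD /= trmxK addrC.
rewrite qformZ qformD qform_tr -mulr2n -scaler_nat scalerA mulVf ?scale1r //.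
by rewrite pnatr_eq0.
Qed.

Lemma qform_congr_diag (U : 'M[K]_k) (c : 'rV[K]_k) :
  qform (U *m diag_mx c *m U^T) = \sum_l c 0 l *: linform (fun i => U i l) ^+ 2.
Proof.
rewrite /qform mul_mx_diag.
transitivity (\sum_i \sum_j \sum_l (c 0 l * (U i l * U j l)) *: ('X_i * 'X_j)).
  apply: eq_bigr => i _; apply: eq_bigr => j _.
  rewrite mxE scaler_suml; apply: eq_bigr => l _.
  by rewrite !mxE mulrAC [_ * c 0 l]mulrC.
under eq_bigr do rewrite exchange_big.
rewrite exchange_big; apply: eq_bigr => l _.
rewrite expr2 /linform mulr_suml scaler_sumr; apply: eq_bigr => i _.
rewrite mulr_sumr scaler_sumr; apply: eq_bigr => j _.
by rewrite -scalerAl -scalerAr !scalerA mulrA.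
Qed.

End QuadraticForms.

Section StarConfigurations.
Variable K : numFieldType.

Lemma unitmx_vandermonde_nat n (f : 'I_n -> nat) : injective f ->
  (\matrix_(i, j) ((f i)%:R ^+ j : K)) \in unitmx.
Proof.
move=> inj_f; have -> : \matrix_(i, j) ((f i)%:R ^+ j : K) =
    (Vandermonde n (\row_i ((f i)%:R : K)))^T.
  by apply/matrixP => i j; rewrite !mxE.
rewrite unitmxE det_tr det_Vandermonde unitfE.
apply/prodf_neq0 => i _; apply/prodf_neq0 => j lt_ij.
rewrite !mxE subr_eq0 eqr_nat; apply/negP => /eqP /inj_f eq_ji.
by move: lt_ij; rewrite eq_ji ltnn.
Qed.

Lemma star_forms_extend n r (W : 'M[K]_n.+1) (le_n_r : (n.+1 <= r)%N) :
  W \in unitmx -> exists l : 'I_r -> 'rV_n.+1,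
    star_forms l /\ forall j, l (widen_ord le_n_r j) = row j W.
Proof.
move=> uW; pose V0 : 'M[K]_n.+1 := \matrix_(j, i) ((j : nat)%:R ^+ i).
have uV0 : V0 \in unitmx by apply: unitmx_vandermonde_nat => a b /val_inj.
pose M := invmx V0 *m W.
have uM : M \in unitmx by rewrite unitmx_mul unitmx_inv uV0.
exists (fun j => \row_i ((j : nat)%:R ^+ i) *m M); split; last first.
  move=> j; have -> : \row_i ((widen_ord le_n_r j : nat)%:R ^+ i) = row j V0.
    by apply/rowP => i; rewrite !mxE.
  by rewrite mulmxA -row_mul mulmxV // -row_mul mul1mx.
split=> // f inj_f.
have -> : \matrix_(i < n.+1) (\row_i0 ((f i : nat)%:R ^+ i0) *m M) =
    \matrix_(i, j) ((f i : nat)%:R ^+ j : K) *m M.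
  apply/row_matrixP => i; rewrite rowK row_mul; congr (_ *m _).
  by apply/rowP => j; rewrite !mxE.
rewrite row_free_unit unitmx_mul uM andbT.
by apply: unitmx_vandermonde_nat => a b /val_inj /inj_f.
Qed.

Lemma star_point_dual_basis n r (l : 'I_r -> 'rV[K]_n.+1) (W : 'M[K]_n.+1)
    (le_n_r : (n.+1 <= r)%N) :
  W \in unitmx -> (forall j, l (widen_ord le_n_r j) = row j W) ->
  forall p t, t != 0 -> star_point l (\row_i (t * invmx W i p)).
Proof.
move=> uW lW p t nz_t; set x := \row_i _.
have lx j : (l (widen_ord le_n_r j) *m x^T) 0 0 = t * (j == p)%:R.
  have <- : (W *m invmx W) j p = (j == p)%:R by rewrite mulmxV // mxE.
  rewrite lW !mxE mulr_sumr; apply: eq_bigr => i _.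
  by rewrite !mxE mulrCA.
split.
  apply: contra_neq (nz_t) => x0.
  by have := lx p; rewrite x0 trmx0 mulmx0 mxE eqxx mulr1.
exists [set widen_ord le_n_r j | j in [set~ p]]; split.
  by rewrite card_imset ?cardsC1 ?card_ord // => a b [] /val_inj.
move=> j' /imsetP [j j_neq_p ->].
by rewrite lx; move: j_neq_p; rewrite in_setC1 => /negbTE ->; rewrite mulr0.
Qed.

Lemma apolar_star_sum_sqr n r (l : 'I_r -> 'rV[K]_n.+1) (I : finType)
    (c : I -> K) (v : I -> 'I_n.+1 -> K) :
  (forall p t, t != 0 -> star_point l (\row_i (t * v p i))) ->
  apolar_star l (\sum_p c p *: linform (v p) ^+ 2).
Proof.
move=> v_star D D_ideal; rewrite unfold_in /perp dact_sum.
apply/eqP/big1 => p _; rewrite dact_linform_exp ?scaler0 // => t nz_t.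
rewrite -(D_ideal _ (v_star p t nz_t)); apply: meval_eq => i.
by rewrite mxE.
Qed.

Lemma quadratic_form_has_apolar_star n r (F : {mpoly K[n.+1]}) :
  (n.+1 <= r)%N -> quadratic_form F -> has_apolar_star r F.
Proof.
move=> le_n_r qF; have [S sS ->] := quadratic_form_qform_sym qF.
have two_neq0 : 2%:R != 0 :> K by rewrite pnatr_eq0.
have [W uW [c eW]] := sym_mx_congr_diag two_neq0 sS.
have eS : S = invmx W *m diag_mx c *m (invmx W)^T.
  rewrite -eW trmx_inv !mulmxA mulVmx // mul1mx -mulmxA mulmxV ?mulmx1 //.
  by rewrite unitmx_tr.
have [l [star_l lW]] := star_forms_extend le_n_r uW.
exists l; split=> //; rewrite eS qform_congr_diag.
exact/apolar_star_sum_sqr/(star_point_dual_basis uW lW).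
Qed.

End StarConfigurations.

Theorem lemma3p2 (R : realType) (n r : nat) : (1 <= n)%N ->
  (general_quadric (fun F : {mpoly R[i][n.+1]} => has_apolar_star r F)
   <-> (n.+1 <= r)%N).
Proof.
move=> _; split.
  by move=> [G [[F0 [qF0 nz]] HP]]; have [l [[le_n_r _] _]] := HP F0 qF0 nz.
move=> le_n_r; exists 1; split.
  exists 0; split; first by rewrite /quadratic_form msupp0.
  by rewrite -mpolyC1 mevalC oner_eq0.
by move=> F qF _; apply: quadratic_form_has_apolar_star.
Qed.
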